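(* For every $n\in\mathbb N$ there is an isomorphism of $\Bbbk\mathfrak S_n\otimes\Bbbk\mathbf{FA}^{\mathrm{op}}$-modules $$\hom_{\Bbbk\mathbf{FA}}(\overline P^{\otimes n},P^{\mathbf{FA}}_{\bullet})\;\cong\;\Bbbk\mathbf{FS}(\bullet,\mathbf n).$$ More precisely, the map $$\hom_{\Bbbk\mathbf{FA}}(P^{\mathbf{FA}}_{\mathbf n},P^{\mathbf{FA}}_{\mathbf t})\longrightarrow \hom_{\Bbbk\mathbf{FA}}(\overline P^{\otimes n},P^{\mathbf{FA}}_{\mathbf t})$$ given by restriction along the inclusion $\overline P^{\otimes n}\hookrightarrow P^{\mathbf{FA}}_{\mathbf n}$ is identified, via the Yoneda isomorphism $\hom_{\Bbbk\mathbf{FA}}(P^{\mathbf{FA}}_{\mathbf n},P^{\mathbf{FA}}_{\mathbf t})\cong\Bbbk\mathbf{FA}(\mathbf t,\mathbf n)$, with the surjection $\Bbbk\mathbf{FA}(\mathbf t,\mathbf n)\twoheadrightarrow\Bbbk\mathbf{FS}(\mathbf t,\mathbf n)$ that sends each surjective map to itself and each non-surjective map to $0$; this identification is natural in $\mathbf t\in\mathbf{FA}^{\mathrm{op}}$ and $\mathfrak S_n$-equivariant.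
   Context: Let $\Bbbk$ be a field. $\mathbf{FA}$ denotes the category of finite sets and all maps, and $\mathbf{FI}$, $\mathbf{FS}$, $\mathbf{FB}$ its wide subcategories of injections, surjections and bijections respectively; $\mathbf n=\{1,\dots,n\}$ for $n\in\mathbb N$ ($\mathbf 0=\emptyset$), and $\mathfrak S_n$ is the symmetric group. For a category $\mathcal C$, $\Bbbk\mathcal C(X,Y)$ is the $\Bbbk$-vector space with basis $\mathcal C(X,Y)$. A $\Bbbk\mathbf{FA}$-module is a functor from $\mathbf{FA}$ to $\Bbbk$-vector spaces (these form the abelian category $\mathcal F(\mathbf{FA})$); $\otimes$ denotes the pointwise tensor product over $\Bbbk$, and $\hom_{\Bbbk\mathbf{FA}}$ denotes natural transformations. $P^{\mathbf{FA}}_{\mathbf n}:=\Bbbk\mathbf{FA}(\mathbf n,-)$, so $P^{\mathbf{FA}}_{\mathbf n}(X)\cong\Bbbk[X]^{\otimes n}$ (where $\Bbbk[X]$ has basis $\{[x]:x\in X\}$), with the right $\mathfrak S_n$-action by precomposition, equivalently place permutation of tensor factors; write $P^{\mathbf{FA}}:=P^{\mathbf{FA}}_{\mathbf 1}$. Let $\overline{\Bbbk}$ be the functor with value $\Bbbk$ on non-empty sets (all maps acting by the identity) and $0$ on $\emptyset$, and $\Bbbk_{\mathbf 0}$ the functor with value $\Bbbk$ on $\emptyset$ and $0$ on non-empty sets. $\overline P$ is the kernel of the surjection $P^{\mathbf{FA}}\to\overline\Bbbk$, $[x]\mapsto 1$; thus $\overline P(X)=\{\sum_x a_x[x]:\sum_x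 a_x=0\}$. For $n\ge1$, $\overline P^{\otimes n}$ is the $n$-fold pointwise tensor power, a subfunctor of $P^{\mathbf{FA}}_{\mathbf n}$ stable under the place-permutation right action of $\mathfrak S_n$; by convention $\overline P^{\otimes 0}:=\overline\Bbbk$. $\Bbbk\mathbf{FS}(-,\mathbf n)$ is regarded as a $\Bbbk\mathbf{FA}^{\mathrm{op}}$-module (contravariant functor on $\mathbf{FA}$) as the quotient of $\Bbbk\mathbf{FA}(-,\mathbf n)$ by the span of non-surjective maps: for $h:Y\to X$ and a surjection $g:X\to\mathbf n$, $[g]\cdot h=[g\circ h]$ if $g\circ h$ is surjective and $0$ otherwise; $\mathfrak S_n$ acts by postcomposition. *)

(* Concrete model of kFA-modules restricted to the skeleton
   {'I_m : m in nat} of FA (finite sets 'I_m = {0,..,m-1}). *)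
From HB Require Import structures.
From mathcomp Require Import all_boot all_order all_algebra all_fingroup.
Set Implicit Arguments. Unset Strict Implicit. Unset Printing Implicit Defensive.
Import GRing.Theory.
Local Open Scope ring_scope.

Notation PFA K n m := {ffun {ffun 'I_n -> 'I_m} -> K}.

Section Defs.
Variable K : fieldType.

(* P^{FA}_n ('I_m) = k FA(n, m) = k['I_m]^{(x) n}: coefficient vectors on the
   basis of maps g : 'I_n -> 'I_m  ([g] <-> [g 1] (x) ... (x) [g n]). *)

Definition Pmap (n m p : nat) (f : 'I_m -> 'I_p) (v : PFA K n m) : PFA K n p :=
  [ffun g' : {ffun 'I_n -> 'I_p} =>
     \sum_(g : {ffun 'I_n -> 'I_m} | [ffun i => f (g i)] == g') v g].

(* contravariant action of h : 'I_s -> 'I_t : P_t -> P_s, [g] |-> [g o h]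
   (for s = t = n and h a permutation this is the right S_n-action,
    i.e. place permutation of tensor factors). *)
Definition Pre (s t m : nat) (h : 'I_s -> 'I_t) (v : PFA K t m) : PFA K s m :=
  [ffun g' : {ffun 'I_s -> 'I_m} =>
     \sum_(g : {ffun 'I_t -> 'I_m} | [ffun i => g (h i)] == g') v g].

Definition ptens (n m : nat) (u : 'I_n -> {ffun 'I_m -> K}) : PFA K n m :=
  [ffun g : {ffun 'I_n -> 'I_m} => \prod_(i < n) u i (g i)].

(* v lies in Pbar^{(x) n}('I_m): for n >= 1, v is in the span of the pure
   tensors of elements of Pbar('I_m) = {sum_x a_x [x] | sum_x a_x = 0};
   for n = 0, Pbar^{(x) 0} = kbar (k on non-empty sets, 0 on the empty set). *)
Definition Pbar_tens (n m : nat) (v : PFA K n m) : Prop :=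
  if n is 0 then (0 < m)%N \/ v = 0
  else exists (N : nat) (u : 'I_N -> 'I_n -> {ffun 'I_m -> K}),
      (forall j i, \sum_(x < m) u j i x = 0) /\ v = \sum_(j < N) ptens (u j).

Definition is_hom (n t : nat) (alpha : forall m, PFA K n m -> PFA K t m) : Prop :=
  (forall m (c : K) (v w : PFA K n m), Pbar_tens v -> Pbar_tens w ->
      alpha m [ffun g => c * v g + w g] =
        [ffun g' => c * alpha m v g' + alpha m w g']) /\
  (forall m p (f : 'I_m -> 'I_p) (v : PFA K n m), Pbar_tens v ->
      alpha p (Pmap f v) = Pmap f (alpha m v)).

Definition hom_eq (n t : nat) (alpha beta : forall m, PFA K n m -> PFA K t m) : Prop :=
  forall m (v : PFA K n m), Pbar_tens v -> alpha m v = beta m v.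

(* Yoneda: a = sum_phi a_phi [phi] in kFA('I_t,'I_n) = P_t('I_n) gives the
   natural transformation P_n -> P_t, [g] |-> sum_phi a_phi [g o phi];
   Yon a restricted to Pbar^{(x) n} is the restriction map of the statement. *)
Definition Yon (n t : nat) (a : PFA K t n) (m : nat) (v : PFA K n m) : PFA K t m :=
  [ffun psi : {ffun 'I_t -> 'I_m} =>
     \sum_(g : {ffun 'I_n -> 'I_m})
       \sum_(phi : {ffun 'I_t -> 'I_n} | [ffun i => g (phi i)] == psi)
          v g * a phi].

Definition surjf (t n : nat) (phi : {ffun 'I_t -> 'I_n}) : bool :=
  [forall j : 'I_n, exists i : 'I_t, phi i == j].

(* kFS('I_t,'I_n) is modelled as the elements of kFA('I_t,'I_n) supported on
   surjections; projS is the surjection kFA -> kFS (non-surjections |-> 0). *)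
Definition projS (t n : nat) (a : PFA K t n) : PFA K t n :=
  [ffun phi => if surjf phi then a phi else 0].

Definition FSact (s t n : nat) (h : 'I_s -> 'I_t) (b : PFA K t n) : PFA K s n :=
  projS (Pre h b).

End Defs.

From HB Require Import structures.
From mathcomp Require Import all_boot all_order all_algebra all_fingroup.
Import GRing.Theory.
Local Open Scope ring_scope.

(** Everything is controlled by the element
    [e_n = ([1] - [*]) (x) ... (x) ([n] - [*])] of [Pbar^{(x) n}('I_n.+1)], where
    [*] is the extra point [ord_max] of ['I_n.+1].  Every element of
    [Pbar^{(x) n}('I_m)], once [m] is embedded in [m.+1], is a linear combination
    of images of [e_n] under maps fixing [*]; hence a natural transformation
    [Pbar^{(x) n} -> P_t] vanishes as soon as its value at [e_n] vanishes at all
    [psi : t -> n.+1] avoiding [*].  If such a [psi] misses some point [j] of [n],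
    collapsing [j] onto [*] kills [e_n] but fixes [psi], so only the [psi] induced
    by surjections [phi : t -> n] matter, and there the Yoneda map of [a] takes
    the value [a phi]. *)

Set Implicit Arguments.
Unset Strict Implicit.

Lemma sum_fibers_cond (R : nmodType) (I J : finType) (p : I -> J) (P : pred J)
    (F : I -> J -> R) :
  \sum_(j | P j) \sum_(i | p i == j) F i j = \sum_(i | P (p i)) F i (p i).
Proof.
rewrite (exchange_big_dep (fun i => P (p i))) /=; last by move=> j i Pj /eqP->.
apply: eq_bigr => i Pi; rewrite (big_pred1 (p i)) // => j /=.
by case: (eqVneq j (p i)) => [->|ne] /=; rewrite ?Pi ?andbF.
Qed.

Lemma sum_fibers (R : nmodType) (I J : finType) (p : I -> J) (F : I -> J -> R) :
  \sum_j \sum_(i | p i == j) F i j = \sum_i F i (p i).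
Proof. exact: (sum_fibers_cond p xpredT). Qed.

Section Development.
Variable K : fieldType.

Definition scalef (n m : nat) (c : K) (v : PFA K n m) : PFA K n m :=
  [ffun g => c * v g].

Lemma scale1f n m (v : PFA K n m) : scalef 1 v = v.
Proof. by apply/ffunP => g; rewrite ffunE mul1r. Qed.

Lemma Pmap_fiber1 n m p (f : 'I_m -> 'I_p) (v : PFA K n m) (g : {ffun 'I_n -> 'I_m}) :
  (forall g' : {ffun 'I_n -> 'I_m}, [ffun i => f (g' i)] = [ffun i => f (g i)] -> g' = g) ->
  Pmap f v [ffun i => f (g i)] = v g.
Proof.
move=> fiber1; rewrite ffunE (big_pred1 g) // => g' /=.
by apply/eqP/eqP => [/fiber1 | ->].
Qed.

Lemma Pmap_inj n m p (f : 'I_m -> 'I_p) (v : PFA K n m) (g : {ffun 'I_n -> 'I_m}) :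
  injective f -> Pmap f v [ffun i => f (g i)] = v g.
Proof.
move=> f_inj; apply: Pmap_fiber1 => g' /ffunP eq_fg; apply/ffunP => i.
by apply: f_inj; have := eq_fg i; rewrite !ffunE.
Qed.

Lemma Pmap_sum n m p (f : 'I_m -> 'I_p) (I : Type) (r : seq I) (V : I -> PFA K n m) :
  Pmap f (\sum_(k <- r) V k) = \sum_(k <- r) Pmap f (V k).
Proof.
apply/ffunP => g'; rewrite !ffunE sum_ffunE.
under eq_bigr => g _ do rewrite sum_ffunE.
by rewrite exchange_big; apply: eq_bigr => k _; rewrite ffunE.
Qed.

Lemma Pmap_sub n m p (f : 'I_m -> 'I_p) (v w : PFA K n m) :
  Pmap f (v - w) = Pmap f v - Pmap f w.
Proof. by apply/ffunP => g; rewrite !ffunE -sumrB; apply: eq_bigr => x _; rewrite !ffunE. Qed.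

Lemma Yon_linear n t (a : PFA K t n) m (c : K) (v w : PFA K n m) :
  Yon a [ffun g => c * v g + w g] = [ffun g' => c * Yon a v g' + Yon a w g'].
Proof.
apply/ffunP => psi; rewrite /Yon !ffunE mulr_sumr -big_split; apply: eq_bigr => g _.
rewrite mulr_sumr -big_split; apply: eq_bigr => phi _.
by rewrite ffunE mulrDl mulrA.
Qed.

Lemma Yon_Pmap n t (a : PFA K t n) m p (f : 'I_m -> 'I_p) (v : PFA K n m) :
  Yon a (Pmap f v) = Pmap f (Yon a v).
Proof.
apply/ffunP => psi'; rewrite /Yon /Pmap !ffunE.
under eq_bigr => g' _ do under eq_bigr => phi _ do rewrite ffunE big_distrl.
under eq_bigr => g' _ do rewrite exchange_big /=.
rewrite (sum_fibers (fun g : {ffun 'I_n -> 'I_m} => [ffun i => f (g i)])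
  (fun g g' => \sum_(phi : {ffun 'I_t -> 'I_n} | [ffun i => g' (phi i)] == psi') v g * a phi)) /=.
under [RHS]eq_bigr => psi _ do rewrite ffunE.
rewrite [RHS]exchange_big /=; apply: eq_bigr => g _.
rewrite (sum_fibers_cond (fun phi : {ffun 'I_t -> 'I_n} => [ffun i => g (phi i)])
  (fun psi : {ffun 'I_t -> 'I_m} => [ffun i => f (psi i)] == psi')
  (fun phi _ => v g * a phi)) /=.
by apply: eq_bigl => phi; congr (_ == _); apply/ffunP => i; rewrite !ffunE.
Qed.

Lemma Pre_Yon n t s (h : 'I_s -> 'I_t) (a : PFA K t n) m (v : PFA K n m) :
  Pre h (Yon a v) = Yon (Pre h a) v.
Proof.
apply/ffunP => psi'; rewrite /Yon /Pre !ffunE.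
under eq_bigr => psi _ do rewrite ffunE.
rewrite exchange_big /=; apply: eq_bigr => g _.
rewrite (sum_fibers_cond (fun phi : {ffun 'I_t -> 'I_n} => [ffun i => g (phi i)])
  (fun psi : {ffun 'I_t -> 'I_m} => [ffun i => psi (h i)] == psi')
  (fun phi _ => v g * a phi)) /=.
under [RHS]eq_bigr => phi' _ do rewrite ffunE mulr_sumr.
rewrite (sum_fibers_cond (fun phi : {ffun 'I_t -> 'I_n} => [ffun i => phi (h i)])
  (fun phi' : {ffun 'I_s -> 'I_n} => [ffun i => g (phi' i)] == psi')
  (fun phi _ => v g * a phi)) /=.
by apply: eq_bigl => phi; congr (_ == _); apply/ffunP => i; rewrite !ffunE.
Qed.

Lemma Yon_Pre n t (sigma : 'I_n -> 'I_n) (a : PFA K t n) m (v : PFA K n m) :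
  Yon a (Pre sigma v) = Yon (Pmap sigma a) v.
Proof.
apply/ffunP => psi; rewrite /Yon /Pre /Pmap !ffunE.
under eq_bigr => g' _ do under eq_bigr => phi _ do rewrite ffunE big_distrl.
under eq_bigr => g' _ do rewrite exchange_big /=.
rewrite (sum_fibers (fun g : {ffun 'I_n -> 'I_m} => [ffun i => g (sigma i)])
  (fun g g' => \sum_(phi : {ffun 'I_t -> 'I_n} | [ffun i => g' (phi i)] == psi) v g * a phi)) /=.
apply: eq_bigr => g _.
under [RHS]eq_bigr => phi' _ do rewrite ffunE mulr_sumr.
rewrite (sum_fibers_cond (fun phi : {ffun 'I_t -> 'I_n} => [ffun i => sigma (phi i)])
  (fun phi' : {ffun 'I_t -> 'I_n} => [ffun i => g (phi' i)] == psi)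
  (fun phi _ => v g * a phi)) /=.
by apply: eq_bigl => phi; congr (_ == _); apply/ffunP => i; rewrite !ffunE.
Qed.

Lemma surjf_comp s t n (h : 'I_s -> 'I_t) (phi : {ffun 'I_t -> 'I_n}) :
  surjf [ffun i => phi (h i)] -> surjf phi.
Proof.
move=> /forallP surj_phih; apply/forallP => j; have /existsP[i] := surj_phih j.
by rewrite ffunE => /eqP phihi; apply/existsP; exists (h i); rewrite phihi.
Qed.

Lemma surjf_perm t n (sigma : 'S_n) (phi : {ffun 'I_t -> 'I_n}) :
  surjf [ffun i => sigma (phi i)] = surjf phi.
Proof.
apply/forallP/forallP => surj j.
  have /existsP[i] := surj (sigma j).
  by rewrite ffunE (inj_eq perm_inj) => phii; apply/existsP; exists i.
have /existsP[i /eqP phii] := surj ((sigma^-1)%g j).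
by apply/existsP; exists i; rewrite ffunE phii permKV.
Qed.

Lemma projS_Pre s t n (h : 'I_s -> 'I_t) (a : PFA K t n) :
  projS (Pre h a) = FSact h (projS a).
Proof.
apply/ffunP => phi'; rewrite /FSact /projS !ffunE; case: ifP => // surj.
apply: eq_bigr => phi /eqP def_phi'; rewrite ffunE.
by rewrite -def_phi' in surj; rewrite (surjf_comp surj).
Qed.

Lemma projS_Pmap t n (sigma : 'S_n) (a : PFA K t n) :
  projS (Pmap sigma a) = Pmap sigma (projS a).
Proof.
apply/ffunP => phi'; rewrite /projS /Pmap !ffunE; case: ifP => surj.
  by apply: eq_bigr => phi /eqP def_phi'; rewrite ffunE -(surjf_perm sigma) def_phi' surj.
by rewrite big1 // => phi /eqP def_phi'; rewrite ffunE -(surjf_perm sigma) def_phi' surj.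
Qed.

Lemma eq_ptens n m (u u' : 'I_n -> {ffun 'I_m -> K}) :
  u =1 u' -> ptens u = ptens u'.
Proof. by move=> eq_u; apply/ffunP => g; rewrite !ffunE; apply: eq_bigr => i _; rewrite eq_u. Qed.

Definition scale_first n m (c : K) (u : 'I_n.+1 -> {ffun 'I_m -> K}) :
    'I_n.+1 -> {ffun 'I_m -> K} :=
  fun i => if i == ord0 then [ffun x => c * u i x] else u i.

Lemma ptens_scale_first n m c (u : 'I_n.+1 -> {ffun 'I_m -> K}) :
  ptens (scale_first c u) = scalef c (ptens u).
Proof.
apply/ffunP => g; rewrite !ffunE (bigD1 ord0) //= [in RHS](bigD1 ord0) //=.
rewrite /scale_first eqxx ffunE -mulrA; congr (_ * (_ * _)).
by apply: eq_bigr => i /negbTE ->.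
Qed.

Lemma Pbar_tens0 n m : Pbar_tens (0 : PFA K n m).
Proof.
case: n => [|n] /=; first by right.
by exists 0%N, (fun _ _ => 0); split; [case | rewrite big_ord0].
Qed.

Lemma Pbar_tens_ptens n m (u : 'I_n -> {ffun 'I_m -> K}) :
  (0 < m)%N -> (forall i, \sum_x u i x = 0) -> Pbar_tens (ptens u).
Proof.
case: n u => [|n] u m_gt0 sum_u0 /=; first by left.
by exists 1%N, (fun _ => u); rewrite big_ord1.
Qed.

Lemma Pbar_tens_lc n m c (v w : PFA K n m) :
  Pbar_tens v -> Pbar_tens w -> Pbar_tens (scalef c v + w).
Proof.
case: n v w => [|n] v w /=.
  case=> [|->]; first by left.
  case=> [|->]; first by left.
  by right; apply/ffunP => g; rewrite !ffunE mulr0 addr0.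
move=> [N1 [u1 [sum_u1 ->]]] [N2 [u2 [sum_u2 ->]]].
exists (N1 + N2)%N, (fun j => match split j with
                            | inl j1 => scale_first c (u1 j1) | inr j2 => u2 j2 end).
split.
  move=> j i; case: (split j) => [j1|j2]; last exact: sum_u2.
  rewrite /scale_first; case: ifP => _; last exact: sum_u1.
  by under eq_bigr do rewrite ffunE; rewrite -mulr_sumr sum_u1 mulr0.
rewrite big_split_ord /=; congr (_ + _); last first.
  by apply: eq_bigr => j _; rewrite (unsplitK (inr j)).
under [RHS]eq_bigr => j _ do rewrite (unsplitK (inl j)) ptens_scale_first.
apply/ffunP => g; rewrite ffunE !sum_ffunE mulr_sumr.
by apply: eq_bigr => j _; rewrite [RHS]ffunE.
Qed.

Lemma Pbar_tens_add n m (v w : PFA K n m) :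
  Pbar_tens v -> Pbar_tens w -> Pbar_tens (v + w).
Proof. by move=> Pv Pw; rewrite -[v]scale1f; apply: Pbar_tens_lc. Qed.

Lemma Pbar_tens_scale n m c (v : PFA K n m) : Pbar_tens v -> Pbar_tens (scalef c v).
Proof. by move=> Pv; rewrite -[scalef c v]addr0; exact: Pbar_tens_lc Pv (Pbar_tens0 _ _). Qed.

Lemma Pbar_tens_sum n m (I : Type) (r : seq I) (V : I -> PFA K n m) :
  (forall k, Pbar_tens (V k)) -> Pbar_tens (\sum_(k <- r) V k).
Proof.
move=> PV; elim: r => [|x r IHr]; first by rewrite big_nil; apply: Pbar_tens0.
by rewrite big_cons; apply: Pbar_tens_add.
Qed.

Section NaturalTransformation.
Variables (n t : nat) (gamma : forall m, PFA K n m -> PFA K t m).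
Hypothesis gamma_hom : is_hom gamma.

Lemma hom_lc m c (v w : PFA K n m) : Pbar_tens v -> Pbar_tens w ->
  gamma (scalef c v + w) = scalef c (gamma v) + gamma w.
Proof.
move=> Pv Pw; have -> : scalef c v + w = [ffun g => c * v g + w g].
  by apply/ffunP => g; rewrite !ffunE.
by rewrite (proj1 gamma_hom) //; apply/ffunP => g; rewrite !ffunE.
Qed.

Lemma hom0 m : gamma (0 : PFA K n m) = 0.
Proof.
have := hom_lc 1 (Pbar_tens0 n m) (Pbar_tens0 n m).
rewrite !scale1f addr0 => /(congr1 (fun x => x - gamma (0 : PFA K n m))).
by rewrite addrK subrr => ->.
Qed.

Lemma hom_scale m c (v : PFA K n m) : Pbar_tens v -> gamma (scalef c v) = scalef c (gamma v).
Proof.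
by move=> Pv; rewrite -[scalef c v]addr0 hom_lc ?hom0 ?addr0 //; apply: Pbar_tens0.
Qed.

Lemma hom_sum m (I : Type) (r : seq I) (V : I -> PFA K n m) :
  (forall k, Pbar_tens (V k)) -> gamma (\sum_(k <- r) V k) = \sum_(k <- r) gamma (V k).
Proof.
move=> PV; elim: r => [|x r IHr]; first by rewrite !big_nil hom0.
by rewrite !big_cons -[V x]scale1f hom_lc ?scale1f ?IHr //; apply: Pbar_tens_sum.
Qed.

Lemma hom_Pmap m p (f : 'I_m -> 'I_p) (v : PFA K n m) :
  Pbar_tens v -> gamma (Pmap f v) = Pmap f (gamma v).
Proof. exact: (proj2 gamma_hom). Qed.

End NaturalTransformation.

Lemma is_hom_sub n t (alpha beta : forall m, PFA K n m -> PFA K t m) :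
  is_hom alpha -> is_hom beta -> is_hom (fun m v => alpha m v - beta m v).
Proof.
move=> [lin_alpha nat_alpha] [lin_beta nat_beta]; split.
  move=> m c v w Pv Pw; rewrite lin_alpha // lin_beta //; apply/ffunP => g.
  by rewrite !ffunE mulrBr addrACA -opprD.
by move=> m p f v Pv; rewrite nat_alpha // nat_beta // Pmap_sub.
Qed.

Lemma is_hom_Yon n t (a : PFA K t n) : is_hom (Yon a).
Proof. by split => *; [apply: Yon_linear | apply: Yon_Pmap]. Qed.

(** * Expansion in the basis [([x] - [b])] of [Pbar] *)

Definition delta m (a : 'I_m) : {ffun 'I_m -> K} := [ffun x => (x == a)%:R].

Definition push m p (f : 'I_m -> 'I_p) (u : {ffun 'I_m -> K}) : {ffun 'I_p -> K} :=
  [ffun y => \sum_(x | f x == y) u x].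

Lemma Pmap_ptens n m p (f : 'I_m -> 'I_p) (u : 'I_n -> {ffun 'I_m -> K}) :
  Pmap f (ptens u) = ptens (fun i => push f (u i)).
Proof.
apply/ffunP => g'; rewrite /Pmap /ptens !ffunE.
under [RHS]eq_bigr => i _ do rewrite ffunE big_mkcond.
rewrite (bigA_distr_bigA (fun i (y : 'I_m) => if f y == g' i then u i y else 0)) /=.
rewrite [LHS]big_mkcond; apply: eq_bigr => g _.
case: ifP => [/eqP <- | fg_neq].
  by rewrite ffunE; apply: eq_bigr => i _; rewrite ffunE eqxx.
have [i fgi_neq] : exists i, f (g i) != g' i.
  apply/existsP; apply: contraFT fg_neq; rewrite negb_exists => /forallP fg_eq.
  by apply/eqP/ffunP => i; rewrite ffunE; apply/eqP; move: (fg_eq i); rewrite negbK.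
by rewrite (bigD1 i) //= (negbTE fgi_neq) mul0r.
Qed.

Lemma push_delta m p (f : 'I_m -> 'I_p) (a : 'I_m) : push f (delta a) = delta (f a).
Proof.
apply/ffunP => y; rewrite !ffunE big_mkcond (bigD1 a) //= !ffunE eqxx big1 ?addr0.
  by rewrite eq_sym; case: ifP.
by move=> x neq_xa; rewrite ffunE (negbTE neq_xa); case: ifP.
Qed.

Lemma push_sub m p (f : 'I_m -> 'I_p) (u w : {ffun 'I_m -> K}) :
  push f (u - w) = push f u - push f w.
Proof. by apply/ffunP => y; rewrite !ffunE -sumrB; apply: eq_bigr => x _; rewrite !ffunE. Qed.

Lemma sum_push m p (f : 'I_m -> 'I_p) (u : {ffun 'I_m -> K}) :
  \sum_y push f u y = \sum_x u x.
Proof. by under eq_bigr => y _ do rewrite ffunE; apply: (sum_fibers f (fun x _ => u x)). Qed.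

Lemma sum_delta_sub m (a b : 'I_m) : \sum_x (delta a - delta b) x = 0.
Proof.
have sum_delta c : \sum_x delta c x = 1.
  by rewrite (bigD1 c) //= ffunE eqxx big1 ?addr0 // => x /negbTE; rewrite ffunE => ->.
rewrite (eq_bigr (fun x => delta a x - delta b x)) => [|x _]; last by rewrite !ffunE.
by rewrite sumrB !sum_delta subrr.
Qed.

Lemma ptens_zero_sum_expand n M (U : 'I_n -> {ffun 'I_M -> K}) (b : 'I_M) :
  (forall i, \sum_x U i x = 0) ->
  ptens U = \sum_(x : {ffun 'I_n -> 'I_M})
              scalef (\prod_i U i (x i)) (ptens (fun i => delta (x i) - delta b)).
Proof.
move=> sum_U0; apply/ffunP => g; rewrite sum_ffunE !ffunE.
under [RHS]eq_bigr => x _ do rewrite !ffunE -big_split /=.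
rewrite -(bigA_distr_bigA (fun i (y : 'I_M) => U i y * (delta y - delta b) (g i))) /=.
apply: eq_bigr => i _; under eq_bigr => y _ do rewrite !ffunE mulrBr.
rewrite sumrB -mulr_suml sum_U0 mul0r subr0 (bigD1 (g i)) //= eqxx mulr1 big1 ?addr0 //.
by move=> y /negbTE; rewrite eq_sym => ->; rewrite mulr0.
Qed.

Lemma Pbar_tens_widen n m (v : PFA K n m) : Pbar_tens v ->
  exists N (c : 'I_N -> K) (U : 'I_N -> 'I_n -> {ffun 'I_m.+1 -> K}),
    (forall j i, \sum_x U j i x = 0) /\
    Pmap (@lift m.+1 ord_max) v = \sum_(j < N) scalef (c j) (ptens (U j)).
Proof.
case: n v => [|n] v /= Pv.
  exists 1%N, (fun _ => \sum_g v g), (fun _ _ => 0); split; first by move=> ? [].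
  rewrite big_ord1; apply/ffunP => g'; rewrite !ffunE big_ord0 mulr1.
  by apply: eq_bigl => g; apply/eqP/ffunP => -[].
case: Pv => N [u [sum_u0 ->]].
exists N, (fun _ => 1), (fun j i => push (@lift m.+1 ord_max) (u j i)); split.
  by move=> j i; rewrite sum_push sum_u0.
by rewrite Pmap_sum; apply: eq_bigr => j _; rewrite scale1f Pmap_ptens.
Qed.

Definition gen_tens n : PFA K n n.+1 :=
  ptens (fun i => delta (lift ord_max i) - delta ord_max).

Definition lift_max_ffun t n (phi : {ffun 'I_t -> 'I_n}) : {ffun 'I_t -> 'I_n.+1} :=
  [ffun k => lift ord_max (phi k)].

Definition extend_max n M (x : {ffun 'I_n -> 'I_M.+1}) (k : 'I_n.+1) : 'I_M.+1 :=
  if unlift ord_max k is Some i then x i else ord_max.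

Lemma gen_tens_Pbar n : Pbar_tens (gen_tens n).
Proof. by apply: Pbar_tens_ptens => // i; apply: sum_delta_sub. Qed.

Lemma Pmap_extend_max_gen_tens n M (x : {ffun 'I_n -> 'I_M.+1}) :
  Pmap (extend_max x) (gen_tens n) = ptens (fun i => delta (x i) - delta ord_max).
Proof.
rewrite Pmap_ptens; apply: eq_ptens => i.
by rewrite push_sub !push_delta /extend_max liftK unlift_none.
Qed.

Lemma Yon_gen_tens n t (a : PFA K t n) (phi : {ffun 'I_t -> 'I_n}) :
  surjf phi -> Yon a (gen_tens n) (lift_max_ffun phi) = a phi.
Proof.
move=> surj_phi; rewrite /Yon ffunE (bigD1 [ffun i => lift ord_max i]) //= [X in _ + X]big1 ?addr0.
  rewrite (big_pred1 phi) => [|phi' /=].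
    rewrite ffunE big1 ?mul1r // => i _.
    by rewrite !ffunE eqxx eq_sym (negbTE (neq_lift _ _)) subr0.
  apply/eqP/eqP => [/ffunP eq_phi' | ->]; apply/ffunP => k; last by rewrite !ffunE.
  by have := eq_phi' k; rewrite !ffunE => /lift_inj.
move=> g g_neq; apply: big1 => phi' /eqP/ffunP g_phi'.
suff [l /andP[gl_neq gl_max]] : exists l, (g l != lift ord_max l) && (g l != ord_max).
  by rewrite ffunE (bigD1 l) //= !ffunE (negbTE gl_neq) (negbTE gl_max) subrr !mul0r.
have [i gi_neq] : exists i, g i != lift ord_max i.
  apply/existsP; apply: contraR g_neq; rewrite negb_exists => /forallP g_eq.
  by apply/eqP/ffunP => i; rewrite ffunE; apply/eqP; have := g_eq i; rewrite negbK.
have [gi_max | ] := eqVneq (g i) ord_max; last by exists i; apply/andP.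
(* [g i] is the extra point, yet [g o phi'] takes the value [lift i] on a preimage of [i] under [phi]. *)
have /existsP[k /eqP phik] := forallP surj_phi i.
have g_phi'k : g (phi' k) = lift ord_max i by have := g_phi' k; rewrite !ffunE phik.
exists (phi' k); rewrite g_phi'k andbC eq_sym neq_lift /=.
by apply: contra gi_neq => /eqP/lift_inj i_phi'k; rewrite {1}i_phi'k g_phi'k.
Qed.

Section Vanishing.
Variables (n t : nat) (gamma : forall m, PFA K n m -> PFA K t m).
Hypothesis gamma_hom : is_hom gamma.
Hypothesis gamma_gen0 : forall phi : {ffun 'I_t -> 'I_n},
  surjf phi -> gamma (gen_tens n) (lift_max_ffun phi) = 0.

Lemma gen_tens_vanish (psi : {ffun 'I_t -> 'I_n.+1}) :
  (forall k, psi k != ord_max) -> gamma (gen_tens n) psi = 0.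
Proof.
move=> psi_max.
have [/existsP[j /forallP psi_j] | psi_onto] :=
  boolP [exists j : 'I_n, [forall k, psi k != lift ord_max j]].
  (* Collapsing [lift j] onto the extra point kills the generator but fixes [psi]. *)
  pose r (x : 'I_n.+1) := if x == lift ord_max j then ord_max else x.
  have r_psi : [ffun k => r (psi k)] = psi.
    by apply/ffunP => k; rewrite ffunE /r (negbTE (psi_j k)).
  have r_gen : Pmap r (gen_tens n) = 0.
    rewrite Pmap_ptens; apply/ffunP => g; rewrite !ffunE (bigD1 j) //=.
    by rewrite push_sub !push_delta /r eqxx; case: ifP; rewrite subrr ffunE mul0r.
  have r_fiber1 (g' : {ffun 'I_t -> 'I_n.+1}) :
      [ffun k => r (g' k)] = [ffun k => r (psi k)] -> g' = psi.
    rewrite r_psi => /ffunP eq_g'; apply/ffunP => k; have := eq_g' k; rewrite ffunE /r.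
    by case: ifP => // _ max_psi; have := psi_max k; rewrite -max_psi eqxx.
  rewrite -(Pmap_fiber1 (gamma (gen_tens n)) r_fiber1) -(hom_Pmap gamma_hom _ (gen_tens_Pbar n)).
  by rewrite r_gen (hom0 gamma_hom) ffunE.
have psi_lift k : ord_max != psi k by rewrite eq_sym.
pose phi : {ffun 'I_t -> 'I_n} := [ffun k => s2val (unlift_some (psi_lift k))].
have psi_phi : psi = lift_max_ffun phi.
  by apply/ffunP => k; rewrite !ffunE; case: (unlift_some _).
rewrite psi_phi; apply: gamma_gen0; apply/forallP => j.
move: psi_onto; rewrite negb_exists => /forallP/(_ j).
rewrite negb_forall => /existsP[k]; rewrite negbK psi_phi ffunE => /eqP/lift_inj phik.
by apply/existsP; exists k; rewrite phik.
Qed.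

Lemma ptens_delta_vanish M (x : {ffun 'I_n -> 'I_M.+1}) (psi : {ffun 'I_t -> 'I_M.+1}) :
  (forall k, psi k != ord_max) ->
  gamma (ptens (fun i => delta (x i) - delta ord_max)) psi = 0.
Proof.
move=> psi_max; rewrite -Pmap_extend_max_gen_tens (hom_Pmap gamma_hom _ (gen_tens_Pbar n)) ffunE.
apply: big1 => psi' /eqP/ffunP x_psi'; apply: gen_tens_vanish => k.
apply: contra (psi_max k) => /eqP psi'k.
by have := x_psi' k; rewrite !ffunE psi'k /extend_max unlift_none => <-.
Qed.

Lemma ptens_zero_sum_vanish M (U : 'I_n -> {ffun 'I_M.+1 -> K})
    (psi : {ffun 'I_t -> 'I_M.+1}) :
  (forall i, \sum_x U i x = 0) -> (forall k, psi k != ord_max) ->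
  gamma (ptens U) psi = 0.
Proof.
have Pbar_delta (x : {ffun 'I_n -> 'I_M.+1}) :
    Pbar_tens (ptens (fun i => delta (x i) - delta ord_max)).
  by apply: Pbar_tens_ptens => // i; apply: sum_delta_sub.
move=> sum_U0 psi_max; rewrite (ptens_zero_sum_expand ord_max sum_U0) (hom_sum gamma_hom); last first.
  by move=> x; apply: Pbar_tens_scale.
rewrite sum_ffunE big1 // => x _.
by rewrite (hom_scale gamma_hom) // ffunE ptens_delta_vanish ?mulr0.
Qed.

Lemma hom_vanish m (v : PFA K n m) : Pbar_tens v -> gamma v = 0.
Proof.
move=> Pv; apply/ffunP => psi; rewrite [RHS]ffunE.
rewrite -(Pmap_inj (gamma v) psi (@lift_inj m.+1 ord_max)) -(hom_Pmap gamma_hom) //.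
have [N [c [U [sum_U0 ->]]]] := Pbar_tens_widen Pv.
have Pbar_U j : Pbar_tens (ptens (U j)) by apply: Pbar_tens_ptens.
rewrite (hom_sum gamma_hom); last by move=> j; apply: Pbar_tens_scale.
rewrite sum_ffunE big1 // => j _.
rewrite (hom_scale gamma_hom) // ffunE ptens_zero_sum_vanish ?mulr0 // => k.
by rewrite ffunE eq_sym neq_lift.
Qed.

End Vanishing.

Lemma hom_eq_gen_tens n t (alpha beta : forall m, PFA K n m -> PFA K t m) :
  is_hom alpha -> is_hom beta ->
  (forall phi : {ffun 'I_t -> 'I_n}, surjf phi ->
     alpha _ (gen_tens n) (lift_max_ffun phi) = beta _ (gen_tens n) (lift_max_ffun phi)) ->
  hom_eq alpha beta.
Proof.
move=> alpha_hom beta_hom eq_gen m v Pv; apply/eqP; rewrite -subr_eq0; apply/eqP.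
apply: (hom_vanish (is_hom_sub alpha_hom beta_hom)) => // phi surj_phi.
by rewrite !ffunE eq_gen // subrr.
Qed.

End Development.

Theorem mainTheorem1 (K : fieldType) (n t : nat) :
  [/\ (forall a : PFA K t n, is_hom (Yon a)),
      (forall alpha : forall m, PFA K n m -> PFA K t m,
          is_hom alpha -> exists a : PFA K t n, hom_eq alpha (Yon a)),
      (forall a b : PFA K t n, hom_eq (Yon a) (Yon b) <-> projS a = projS b),
      (forall (s : nat) (h : 'I_s -> 'I_t) (a : PFA K t n),
          hom_eq (fun m v => Pre h (Yon a v)) (Yon (Pre h a)) /\
          projS (Pre h a) = FSact h (projS a)) &
      (forall (sigma : 'S_n) (a : PFA K t n),
          hom_eq (fun m v => Yon a (Pre sigma v)) (Yon (Pmap sigma a)) /\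
          projS (Pmap sigma a) = Pmap sigma (projS a))].
Proof.
split.
- exact: is_hom_Yon.
- move=> alpha alpha_hom.
  exists (projS [ffun phi => alpha _ (gen_tens K n) (lift_max_ffun phi)]).
  apply: hom_eq_gen_tens (is_hom_Yon _) _ => // phi surj_phi.
  by rewrite Yon_gen_tens // !ffunE surj_phi.
- move=> a b; split => [eq_ab | eq_projS].
    apply/ffunP => phi; rewrite !ffunE; case: ifP => // surj_phi.
    by rewrite -(Yon_gen_tens a surj_phi) -(Yon_gen_tens b surj_phi) eq_ab //; apply: gen_tens_Pbar.
  apply: hom_eq_gen_tens (is_hom_Yon _) (is_hom_Yon _) _ => phi surj_phi.
  by rewrite !Yon_gen_tens //; have /ffunP/(_ phi) := eq_projS; rewrite !ffunE surj_phi.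
- by move=> s h a; split; [move=> m v _; apply: Pre_Yon | apply: projS_Pre].
- by move=> sigma a; split; [move=> m v _; apply: Yon_Pre | apply: projS_Pmap].
Qed.
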